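(* Let $K$ be a field, $S=K[x_1,\ldots,x_n,y_1,\ldots,y_n]$ standard bigraded with $\deg x_i=(1,0)$, $\deg y_i=(0,1)$, let $>$ be the reverse lexicographic term order induced by $x_1>x_2>\cdots>x_n>y_1>\cdots>y_n$, and let $\phi:S\to S$ be the $K$-algebra homomorphism with $\phi(x_i)=x_i$ and $\phi(y_i)=x_i$. Let $f\in S$ be bihomogeneous of degree $(s,t)$ whose initial monomial is $\operatorname{in}(f)=x_{i_1}\cdots x_{i_s}y_{j_1}\cdots y_{j_t}$ with $i_1\leq\cdots\leq i_s\leq j_1\leq\cdots\leq j_t$. Then $\operatorname{in}(\phi(f))=\phi(\operatorname{in}(f))$ and $\operatorname{in}(f)=\phi(\operatorname{in}(f))^{(t)}$.
   Context: For a form $g=\sum_{1\le i_1\le\cdots\le i_e\le n}a_{i_1\cdots i_e}x_{i_1}\cdots x_{i_e}$ of degree $(e,0)$ and $0\le k\le e$, set $g^{(k)}=\sum a_{i_1\cdots i_e}x_{i_1}\cdots x_{i_{e-k}}y_{i_{e-k+1}}\cdots y_{i_e}$ (replace the $k$ variables with largest indices by the corresponding $y$'s); in particular for a monomial $x_{i_1}\cdots x_{i_e}$ with $i_1\le\cdots\le i_e$, its $(k)$-version is $x_{i_1}\cdots x_{i_{e-k}}y_{i_{e-k+1}}\cdots y_{i_e}$. $\operatorname{in}(\cdot)$ denotes the initial monomial with respect to $>$. *)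

From mathcomp Require Import all_boot all_algebra.
From mathcomp Require Import mpoly.
Set Implicit Arguments. Unset Strict Implicit. Unset Printing Implicit Defensive.
Import GRing.Theory.
Local Open Scope ring_scope.

(* S = K[x_1..x_n, y_1..y_n] is {mpoly K[n + n]}: variable index k : 'I_(n+n),
   x_i = variable (lshift n i), y_i = variable (rshift n i)  (i : 'I_n, 0-based).
   The variable order x_1 > ... > x_n > y_1 > ... > y_n is: smaller index = larger. *)
Definition xv (n : nat) (i : 'I_n) : 'I_(n + n) := lshift n i.
Definition yv (n : nat) (i : 'I_n) : 'I_(n + n) := rshift n i.

Definition revlex_lt (N : nat) (u v : 'X_{1..N}) : Prop :=
  (mdeg u < mdeg v)%N \/
  (mdeg u = mdeg v /\
   exists k : 'I_N, (v k < u k)%N /\ forall j : 'I_N, (k < j)%N -> v j = u j).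

Definition is_initial (K : fieldType) (N : nat) (p : {mpoly K[N]}) (m : 'X_{1..N}) : Prop :=
  m \in msupp p /\ forall m', m' \in msupp p -> m' <> m -> revlex_lt m' m.

Definition bihomog (K : fieldType) (n : nat) (p : {mpoly K[n + n]}) (s t : nat) : Prop :=
  forall m, m \in msupp p ->
    (\sum_(i < n) m (xv i))%N = s /\ (\sum_(i < n) m (yv i))%N = t.

Definition phi_var (n : nat) (k : 'I_(n + n)) : 'I_(n + n) :=
  match split k with inl i => xv i | inr i => xv i end.
Definition phi (K : fieldType) (n : nat) (p : {mpoly K[n + n]}) : {mpoly K[n + n]} :=
  p \mPo [tuple ('X_(phi_var k) : {mpoly K[n + n]}) | k < n + n].

(* g^(k) for a form g of degree (e,0): for each monomial x_{i_1}...x_{i_e}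
   (i_1 <= ... <= i_e), replace the k variables with largest indices by y's. *)
Definition xindices (n : nat) (m : 'X_{1..n + n}) : seq 'I_n :=
  flatten [seq nseq (m (xv i)) i | i <- enum 'I_n].
Definition mono_k (K : fieldType) (n k : nat) (m : 'X_{1..n + n}) : {mpoly K[n + n]} :=
  let l := xindices m in
  (\prod_(i <- take (size l - k) l) 'X_(xv i)) *
  (\prod_(i <- drop (size l - k) l) 'X_(yv i)).
Definition kop (K : fieldType) (n k : nat) (g : {mpoly K[n + n]}) : {mpoly K[n + n]} :=
  \sum_(m <- msupp g) g@_m *: mono_k K k m.

From mathcomp Require Import all_boot all_algebra.
From mathcomp Require Import mpoly.
Set Implicit Arguments. Unset Strict Implicit. Unset Printing Implicit Defensive.
Import GRing.Theory.
Local Open Scope ring_scope.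

(* On monomials phi adds the exponent of y_i to that of x_i, so it preserves
   the total degree. Let u < m be monomials of f of the same bidegree whose
   last differing variable is k. If k = x_l, then u and m agree on all y's, so
   phi u and phi m last differ at x_l, in the same direction. If k = y_l, equal
   y-degrees force m to contain some y_l1 with l1 < l; as no x-index of m
   exceeds a y-index of m, m contains no x_l' with l' >= l, so from x_l on
   phi m is dominated by phi u, strictly at x_l. Either way phi u < phi m.
   For the second claim, the sorted x-index list of phi m is I ++ J, whose
   last t entries are the y-indices of m. *)

Lemma mpolyX_inj (R : nzRingType) (N : nat) :
  injective (fun m : 'X_{1..N} => ('X_[m] : {mpoly R[N]})).
Proof. by move=> u v /(congr1 (@msupp _ _)); rewrite !msuppX => -[]. Qed.

Lemma revlex_lt_irr (N : nat) (u : 'X_{1..N}) : ~ revlex_lt u u.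
Proof. by case=> [|[_ [k []]]]; rewrite ltnn. Qed.

Lemma revlex_lt_tail (N : nat) (u v : 'X_{1..N}) (k0 : 'I_N) :
  mdeg u = mdeg v ->
  (forall j : 'I_N, (k0 <= j)%N -> (v j <= u j)%N) -> (v k0 < u k0)%N ->
  revlex_lt u v.
Proof.
move=> deg_uv le_vu lt_vu_k0; right; split=> //.
have P_k0 : (k0 <= k0)%N && (v k0 != u k0) by rewrite leqnn neq_ltn lt_vu_k0.
have [k /andP [le_k0k neq_k] max_k] :=
  @arg_maxnP _ k0 (fun j : 'I_N => (k0 <= j)%N && (v j != u j)) val P_k0.
exists k; split; first by rewrite ltn_neqAle neq_k le_vu.
move=> j lt_kj; have le_k0j : (k0 <= j)%N by rewrite (leq_trans le_k0k) // ltnW.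
apply/eqP; apply: contraTT lt_kj => neq_j.
by rewrite -leqNgt; apply: (max_k j); rewrite le_k0j.
Qed.

Definition ord_le (n : nat) : rel 'I_n := relpre val leq.

Lemma ord_le_trans (n : nat) : transitive (@ord_le n).
Proof. exact: relpre_trans leq_trans. Qed.

Lemma ord_le_anti (n : nat) : antisymmetric (@ord_le n).
Proof. by move=> a b le_ab; apply: val_inj; apply/eqP; rewrite eqn_leq. Qed.

Lemma pairwise_nseq (T : eqType) (r : rel T) (c : nat) (x : T) :
  reflexive r -> pairwise r (nseq c x).
Proof.
move=> r_refl; elim: c => //= c ->; rewrite andbT; apply/allP => y.
by rewrite mem_nseq => /andP [_ /eqP ->].
Qed.

Lemma pairwise_flatten_nseq (n : nat) (c : 'I_n -> nat) (e : seq 'I_n) :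
  sorted (relpre val ltn) e -> pairwise (@ord_le n) (flatten [seq nseq (c i) i | i <- e]).
Proof.
rewrite sorted_pairwise; last exact: relpre_trans ltn_trans.
elim: e => //= x e IH /andP [lt_x_e /IH pw_e].
rewrite pairwise_cat pairwise_nseq ?pw_e ?andbT //; last exact: leqnn.
apply/allrelP => a b; rewrite mem_nseq => /andP [_ /eqP ->].
case/flattenP => _ /mapP [y y_e ->]; rewrite mem_nseq => /andP [_ /eqP ->].
exact/ltnW/(allP lt_x_e).
Qed.

Lemma count_flatten_nseq (n : nat) (s : seq 'I_n) (x : 'I_n) :
  count_mem x (flatten [seq nseq (count_mem i s) i | i <- enum 'I_n]) = count_mem x s.
Proof.
rewrite count_flatten sumnE !big_map -enumT big_enum /=.
rewrite (eq_bigr (fun i => if i == x then count_mem i s else 0%N)); last first.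
  by move=> i _; rewrite count_nseq /=; case: (i == x); rewrite ?mul1n ?mul0n.
by rewrite -big_mkcond big_pred1_eq.
Qed.

Lemma flatten_nseq_count_sorted (n : nat) (s : seq 'I_n) :
  sorted (@ord_le n) s -> flatten [seq nseq (count_mem i s) i | i <- enum 'I_n] = s.
Proof.
move=> sorted_s; apply: (sorted_eq (@ord_le_trans n) (@ord_le_anti n)) => //.
- rewrite sorted_pairwise; last exact: ord_le_trans.
  apply: pairwise_flatten_nseq.
  by have := iota_ltn_sorted 0 n; rewrite -val_enum_ord sorted_map.
- by apply/allP => x _; rewrite /= count_flatten_nseq.
Qed.

Section Polarization.

Variables (K : fieldType) (n : nat).
Local Notation N := (n + n).

Lemma phi_var_x (i : 'I_n) : phi_var (xv i) = xv i.
Proof. by rewrite /phi_var /xv (unsplitK (inl i)). Qed.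

Lemma phi_var_y (i : 'I_n) : phi_var (yv i) = xv i.
Proof. by rewrite /phi_var /yv (unsplitK (inr i)). Qed.

Definition phi_mnm (u : 'X_{1..N}) : 'X_{1..N} :=
  (\sum_(k < N) U_(phi_var k) *+ u k)%MM.

Lemma phi_mpolyX (u : 'X_{1..N}) : phi ('X_[u] : {mpoly K[N]}) = 'X_[phi_mnm u].
Proof.
rewrite /phi comp_mpolyX /phi_mnm -mprodXnE.
by apply: eq_bigr => k _; rewrite tnth_mktuple.
Qed.

Lemma phi_mnm_x (u : 'X_{1..N}) (i : 'I_n) :
  phi_mnm u (xv i) = (u (xv i) + u (yv i))%N.
Proof.
rewrite /phi_mnm mnm_sumE big_split_ord /=.
have coef_xi (g : 'I_n -> 'I_N) :
    (\sum_(j < n) (U_(xv j) *+ u (g j))%MM (xv i))%N = u (g i).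
  rewrite (bigD1 i) //= mulmnE mnm1E eqxx mul1n big1 ?addn0 // => j ne_ji.
  by rewrite mulmnE mnm1E (inj_eq (@lshift_inj _ _)) (negbTE ne_ji).
rewrite -(coef_xi (@xv n)) -(coef_xi (@yv n)).
by congr (_ + _)%N; apply: eq_bigr => j _; rewrite -?/(xv j) -?/(yv j) ?phi_var_x ?phi_var_y.
Qed.

Lemma phi_mnm_y (u : 'X_{1..N}) (i : 'I_n) : phi_mnm u (yv i) = 0%N.
Proof.
rewrite /phi_mnm mnm_sumE big1 // => k _; rewrite mulmnE mnm1E /phi_var.
by case: split => j; rewrite /xv /yv eq_lrshift.
Qed.

Lemma mcoeff_phi (f : {mpoly K[N]}) (w : 'X_{1..N}) :
  (phi f)@_w = \sum_(u <- msupp f) f@_u * (phi_mnm u == w)%:R.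
Proof.
rewrite {1}/phi comp_mpolyEX raddf_sum; apply: eq_bigr => u _.
rewrite -/(phi 'X_[u]) phi_mpolyX.
by change ((f@_u *: 'X_[phi_mnm u])@_w = f@_u * (phi_mnm u == w)%:R); rewrite mcoeffZ mcoeffX.
Qed.

Lemma is_initial_phi (f : {mpoly K[N]}) (m : 'X_{1..N}) :
  is_initial f m ->
  (forall u, u \in msupp f -> u != m -> revlex_lt (phi_mnm u) (phi_mnm m)) ->
  is_initial (phi f) (phi_mnm m).
Proof.
move=> [m_f _] phi_lt; split.
  rewrite mcoeff_msupp mcoeff_phi (big_rem m m_f) /= eqxx mulr1 big1_seq ?addr0.
    by rewrite -mcoeff_msupp.
  move=> u /andP [_]; rewrite (mem_rem_uniq m (msupp_uniq f)) inE => /andP [ne_um u_f].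
  case: eqP => [eq_phi|]; last by rewrite mulr0.
  by have := phi_lt u u_f ne_um; rewrite eq_phi => /revlex_lt_irr.
move=> w; rewrite mcoeff_msupp mcoeff_phi => nz_w ne_wm.
have [u u_f /eqP eq_uw] : exists2 u, u \in msupp f & phi_mnm u == w.
  apply/hasP; apply: contraTT nz_w => /hasPn no_u.
  by rewrite negbK big1_seq // => u /andP [_ /no_u /negbTE ->]; rewrite mulr0.
by subst w; apply: phi_lt => //; apply: contra_not_neq ne_wm => ->.
Qed.

Definition xdeg (u : 'X_{1..N}) : nat := \sum_(i < n) u (xv i).
Definition ydeg (u : 'X_{1..N}) : nat := \sum_(i < n) u (yv i).

Lemma mdeg_xydeg (u : 'X_{1..N}) : mdeg u = (xdeg u + ydeg u)%N.
Proof. by rewrite mdegE big_split_ord. Qed.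

Lemma mdeg_phi_mnm (u : 'X_{1..N}) : mdeg (phi_mnm u) = (xdeg u + ydeg u)%N.
Proof.
rewrite mdegE big_split_ord /= (eq_bigr (fun=> 0%N) (fun i _ => phi_mnm_y u i)).
rewrite big_const_ord iter_addn_0 mul0n addn0 -big_split /=.
by apply: eq_bigr => i _; rewrite phi_mnm_x.
Qed.

Definition xy_sorted (u : 'X_{1..N}) : Prop :=
  forall a b : 'I_n, (0 < u (xv a))%N -> (0 < u (yv b))%N -> (a <= b)%N.

Lemma ydeg_eq_lower_y (u v : 'X_{1..N}) (l : 'I_n) :
  ydeg u = ydeg v -> (v (yv l) < u (yv l))%N ->
  (forall l' : 'I_n, (l < l')%N -> v (yv l') = u (yv l')) ->
  exists2 l1 : 'I_n, (l1 < l)%N & (0 < v (yv l1))%N.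
Proof.
move=> eq_ydeg lt_l eq_above.
apply/exists_inP; apply: contraT; rewrite negb_exists_in => /forall_inP no_lower.
have : (ydeg v < ydeg u)%N.
  rewrite /ydeg (bigD1 l) // [X in (_ < X)%N](bigD1 l) //= -addSn leq_add //.
  apply: leq_sum => i ne_il; case: (ltngtP i l) => [lt_il|lt_li|eq_il].
  - by move: (no_lower i lt_il); rewrite lt0n negbK => /eqP ->.
  - by rewrite eq_above.
  - by rewrite (val_inj eq_il) eqxx in ne_il.
by rewrite eq_ydeg ltnn.
Qed.

Lemma revlex_lt_phi_mnm (u m : 'X_{1..N}) :
  xy_sorted m -> xdeg u = xdeg m -> ydeg u = ydeg m ->
  revlex_lt u m -> revlex_lt (phi_mnm u) (phi_mnm m).
Proof.
move=> sorted_m eq_xdeg eq_ydeg [|[_ [k [lt_k eq_above]]]].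
  by rewrite !mdeg_xydeg eq_xdeg eq_ydeg ltnn.
have deg_phi : mdeg (phi_mnm u) = mdeg (phi_mnm m) by rewrite !mdeg_phi_mnm eq_xdeg eq_ydeg.
have y_above (l l' : 'I_n) : (xv l < yv l')%N by rewrite /= ltn_addr.
case: (split_ordP k) lt_k eq_above => l ->{k} lt_k eq_above.
- have eq_y (l' : 'I_n) : m (yv l') = u (yv l') by rewrite eq_above ?y_above.
  apply: (revlex_lt_tail deg_phi (k0 := xv l)) => [j|]; last by rewrite !phi_mnm_x eq_y ltn_add2r.
  case: (split_ordP j) => l' ->{j}; last by rewrite !phi_mnm_y.
  rewrite !phi_mnm_x eq_y leq_add2r /= leq_eqVlt => /orP [/eqP/val_inj <-|lt_ll'].
    exact: ltnW.
  by rewrite eq_above.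
- have le_y (l' : 'I_n) : (l <= l')%N -> (m (yv l') <= u (yv l'))%N.
    rewrite leq_eqVlt => /orP [/eqP/val_inj <-|lt_ll']; first exact: ltnW.
    by rewrite eq_above //= ltn_add2l.
  have [l1 lt_l1l pos_l1] : exists2 l1 : 'I_n, (l1 < l)%N & (0 < m (yv l1))%N.
    by apply: ydeg_eq_lower_y lt_k _ => // l' lt_ll'; rewrite eq_above //= ltn_add2l.
  have no_x (l' : 'I_n) : (l <= l')%N -> m (xv l') = 0%N.
    move=> le_ll'; apply/eqP; rewrite -leqn0 leqNgt; apply/negP => pos_l'.
    by have := leq_trans le_ll' (sorted_m _ _ pos_l' pos_l1); rewrite leqNgt lt_l1l.
  apply: (revlex_lt_tail deg_phi (k0 := xv l)) => [j|].
    case: (split_ordP j) => l' ->{j}; last by rewrite !phi_mnm_y.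
    by rewrite !phi_mnm_x => le_ll'; rewrite no_x // (leq_trans (le_y _ le_ll')) ?leq_addl.
  by rewrite !phi_mnm_x no_x // (leq_trans lt_k) ?leq_addl.
Qed.


Section ProductOfVariables.

Variables (s t : nat) (m : 'X_{1..N}) (I : s.-tuple 'I_n) (J : t.-tuple 'I_n).
Hypothesis eq_m :
  ('X_[m] : {mpoly K[N]}) = (\prod_(i <- I) 'X_(xv i)) * (\prod_(j <- J) 'X_(yv j)).
Hypothesis sorted_IJ : sorted (@ord_le n) (I ++ J).

Lemma mnm_prodX (i : 'I_n) : m (xv i) = count_mem i I /\ m (yv i) = count_mem i J.
Proof.
move: eq_m; rewrite (mprodXE K (fun i => U_(xv i)%MM)) (mprodXE K (fun i => U_(yv i)%MM)).
rewrite -mpolyXD => /mpolyX_inj ->; rewrite !mnmDE !mnm_sumE -!sum1_count; split.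
- rewrite [X in (_ + X)%N]big1 ?addn0; last by move=> j _; rewrite mnm1E eq_rlshift.
  by rewrite [RHS]big_mkcond; apply: eq_bigr => j _; rewrite mnm1E eq_lshift /=; case: eqP.
- rewrite [X in (X + _)%N]big1 ?add0n; last by move=> j _; rewrite mnm1E eq_lrshift.
  by rewrite [RHS]big_mkcond; apply: eq_bigr => j _; rewrite mnm1E eq_rshift /=; case: eqP.
Qed.

Lemma xy_sorted_prodX : xy_sorted m.
Proof.
move=> a b; rewrite (proj1 (mnm_prodX a)) (proj2 (mnm_prodX b)).
rewrite -!has_count !has_pred1; move: sorted_IJ.
rewrite sorted_pairwise ?pairwise_cat; last exact: ord_le_trans.
by case/andP=> /allrelP le_IJ _; apply: le_IJ.
Qed.

Lemma kop_phi_prodX : kop t (phi ('X_[m] : {mpoly K[N]})) = 'X_[m].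
Proof.
have xindices_phi : xindices (phi_mnm m) = I ++ J.
  rewrite /xindices -[RHS](flatten_nseq_count_sorted sorted_IJ); congr flatten.
  apply: eq_map => i /=; have [x_i y_i] := mnm_prodX i.
  by rewrite phi_mnm_x x_i y_i count_cat.
rewrite phi_mpolyX /kop msuppX big_seq1 mcoeffX eqxx scale1r /mono_k xindices_phi.
by rewrite size_cat !size_tuple addnK take_size_cat ?drop_size_cat ?size_tuple.
Qed.

End ProductOfVariables.

End Polarization.

Theorem lemma3p4 (K : fieldType) (n s t : nat) (f : {mpoly K[n + n]})
  (m : 'X_{1..n + n}) (I : s.-tuple 'I_n) (J : t.-tuple 'I_n) :
  bihomog f s t ->
  is_initial f m ->
  sorted leq (map val I ++ map val J) ->
  ('X_[m] : {mpoly K[n + n]}) = (\prod_(i <- I) 'X_(xv i)) * (\prod_(j <- J) 'X_(yv j)) ->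
  (exists m' : 'X_{1..n + n}, is_initial (phi f) m' /\ ('X_[m'] : {mpoly K[n + n]}) = phi ('X_[m] : {mpoly K[n + n]}))
  /\ ('X_[m] : {mpoly K[n + n]}) = kop t (phi ('X_[m] : {mpoly K[n + n]})).
Proof.
move=> bihomog_f [m_f lt_m] sorted_IJ eq_m.
have {}sorted_IJ : sorted (@ord_le n) (I ++ J) by rewrite -sorted_map map_cat.
split; last by rewrite (kop_phi_prodX eq_m sorted_IJ).
exists (phi_mnm m); split; last by rewrite phi_mpolyX.
apply: is_initial_phi => // u u_f ne_um.
have [[xdeg_u ydeg_u] [xdeg_m ydeg_m]] := (bihomog_f u u_f, bihomog_f m m_f).
apply: revlex_lt_phi_mnm; first exact: xy_sorted_prodX eq_m sorted_IJ.
- by rewrite /xdeg xdeg_u xdeg_m.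
- by rewrite /ydeg ydeg_u ydeg_m.
- exact/lt_m/eqP.
Qed.
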